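(* For any positive integers $r,t$ and positive real number $k'$ there exists a real number $\alpha=\alpha(r,t,k')>0$ such that the following holds. Let $\ell$ be a nonnegative integer or $\infty$, let $b$ be a positive integer, let $\epsilon'\ge0$ be real, let $G$ be a graph, $Y\subseteq V(G)$, and let $\mathcal C$ be a collection of pairwise disjoint connected subgraphs of $G-Y$, each with at most $b$ vertices, each $r$-adherent to $Y$ and each of radius at most $\ell$. Then at least one of the following holds: (1) there exists a graph $L$ with $|E(L)|>k'|V(L)|^{1+\epsilon'}$ such that $G$ contains a subgraph isomorphic to a $[2\ell+1]$-subdivision of $L$ whose branch vertices all lie in $Y$; (2) there exist $r$ distinct vertices $y_1,\dots,y_r\in Y$ and $t$ distinct members $C_1,\dots,C_t\in\mathcal C$ such that each $y_i$ has a neighbour in $V(C_j)$ for all $i\in[r]$, $j\in[t]$; (3) $|\mathcal C|\le\alpha|Y|^{1+\epsilon'(r-1)}$.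
   Context: Graphs are finite and simple. A subgraph $L$ of $G$ is $r$-adherent to $Y\subseteq V(G)$ if $V(L)\cap Y=\emptyset$ and at least $r$ vertices of $Y$ have a neighbour in $V(L)$. The radius of a connected graph is the least $k$ such that some vertex is at distance at most $k$ from every vertex. For a positive integer $m$, $[m]=\{1,\dots,m\}$, and $[\infty]$ denotes the set of all positive integers. For a set $S$ of nonnegative integers, an $S$-subdivision of a graph $L$ is obtained by subdividing each edge $e$ of $L$ exactly $s_e$ times for some $s_e\in S$; the vertices of $L$ are the branch vertices. *)

From HB Require Import structures.
From mathcomp Require Import all_boot all_order all_algebra.
From mathcomp Require Import reals exp.
Set Implicit Arguments. Unset Strict Implicit. Unset Printing Implicit Defensive.
Import Order.TTheory GRing.Theory Num.Theory.

(* Graphs: a finite simple graph is a symmetric irreflexive relation e on a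
   finType T.  [None] encodes infinity for nonnegative-integer-or-infinity
   parameters. *)

Definition in_bracket (m : option nat) (s : nat) : bool :=
  (0 < s) && (if m is Some k then s <= k else true).

Definition two_l_plus_one (l : option nat) : option nat :=
  omap (fun k => 2 * k + 1) l.

Definition is_subgraph (T : finType) (e : rel T) (V : {set T}) (E : rel T) :=
  (forall x y, E x y -> [/\ x \in V, y \in V & e x y]) /\
  (forall x y, E x y = E y x).

Definition sg_connected (T : finType) (V : {set T}) (E : rel T) :=
  V != set0 /\ (forall x y, x \in V -> y \in V -> connect E x y).

Definition radius_le (T : finType) (V : {set T}) (E : rel T) (l : option nat) :=
  if l is Some k then
    exists2 c, c \in V & forall x, x \in V ->
      exists p : seq T, [/\ path E c p, last c p = x & size p <= k]
  else True.

Definition adherent (T : finType) (e : rel T) (V : {set T}) (r : nat) (Y : {set T}) :=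
  [disjoint V & Y] /\ r <= #|[set y in Y | [exists x in V, e y x]]|.

Definition nedges (n : nat) (eL : rel 'I_n) : nat :=
  #|[set p : 'I_n * 'I_n | (p.1 < p.2)%N && eL p.1 p.2]|.

(* G contains a subgraph isomorphic to an S-subdivision of L (S = [m]),
   whose branch vertices all lie in Y: phi maps branch vertices injectively
   into Y; each edge uv (u < v) of L is replaced by the path
   phi u, P u v, phi v in G with #(P u v) in S internal vertices; all
   internal vertices are distinct from each other and from branch vertices. *)
Definition contains_subdivision (T : finType) (e : rel T) (Y : {set T})
    (m : option nat) (n : nat) (eL : rel 'I_n) : Prop :=
  exists phi : 'I_n -> T, injective phi /\ (forall v, phi v \in Y) /\
  exists P : 'I_n -> 'I_n -> seq T,
    (forall u v : 'I_n, (u < v)%N -> eL u v ->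
       [/\ in_bracket m (size (P u v)),
           path e (phi u) (rcons (P u v) (phi v)),
           uniq (P u v) &
           forall w, phi w \notin P u v]) /\
    (forall u v u' v' : 'I_n, (u < v)%N -> eL u v -> (u' < v')%N -> eL u' v' ->
       (u, v) != (u', v') -> forall x, x \in P u v -> x \notin P u' v').

(* Let A i be r vertices of Y adjacent to the i-th component C_i.  Choose a
   maximal "pair system": an assignment of distinct unordered pairs {x, y} of
   vertices of A i to some of the components C_i.  Routing x -> C_i -> y
   realises the graph of carried pairs, restricted to any subset of Y, as a
   [2l+1]-subdivision of G with branch vertices in Y.  Hence, unless outcome (1)
   holds, the carried graph has at most 2k'|Y0|^(1+eps) arcs on every Y0 of Y
   and is therefore (2k'|Y|^eps)-degenerate.
   - The used components are at most the carried arcs: <= 2k'|Y|^(1+eps).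
   - By maximality, each unused A i is an r-clique of the carried graph; a
     degenerate graph has at most |Y| (2k'|Y|^eps)^(r-1) such cliques, and
     unless outcome (2) holds each is the A i of at most t - 1 components.
   Summing gives outcome (3) with alpha = 2k' + (t-1)(2k')^(r-1). *)
From HB Require Import structures.
From mathcomp Require Import all_boot all_order all_algebra.
From mathcomp Require Import reals exp.
From mathcomp Require Import zify.
From mathcomp.algebra_tactics Require Import lra.
From Stdlib Require Import Classical.
Import Order.TTheory GRing.Theory Num.Theory.
Set Implicit Arguments. Unset Strict Implicit. Unset Printing Implicit Defensive.

Lemma last_rev_belast (T : Type) (c : T) (p : seq T) :
  last (last c p) (rev (belast c p)) = c.
Proof. by case: p => //= y p; rewrite rev_cons last_rcons. Qed.

Lemma path_in (T : eqType) (V : pred T) (E : rel T) x q :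
  (forall a b, E a b -> b \in V) -> path E x q -> {subset q <= V}.
Proof.
move=> EV; elim: q x => //= y q IH x /andP[Exy pq] z.
rewrite inE => /orP[/eqP->|]; [exact: EV Exy | exact: IH pq z].
Qed.

(* In a graph of radius at most k, any two vertices are joined by a walk
   of at most 2k edges, passing through the centre. *)
Lemma radius_walk (T : finType) (V : {set T}) (E : rel T) k x1 x2 :
  (forall a b, E a b = E b a) -> radius_le V E (Some k) ->
  x1 \in V -> x2 \in V ->
  exists p, [/\ path E x1 p, last x1 p = x2 & (size p <= 2 * k)%N].
Proof.
move=> Esym [c _ Hc] x1V x2V.
have [p1 [pp1 lp1 sp1]] := Hc _ x1V; have [p2 [pp2 lp2 sp2]] := Hc _ x2V.
exists (rev (belast c p1) ++ p2); split.
- rewrite cat_path -lp1 last_rev_belast pp2 andbT rev_path.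
  by rewrite (@eq_path _ _ E) // => a b /=; rewrite Esym.
- by rewrite last_cat -lp1 last_rev_belast.
- by rewrite size_cat size_rev size_belast; lia.
Qed.

Lemma short_path (T : finType) (V : {set T}) (E : rel T) (l : option nat) x1 x2 :
  (forall a b, E a b = E b a) -> sg_connected V E -> radius_le V E l ->
  x1 \in V -> x2 \in V ->
  exists q, [/\ path E x1 q, last x1 q = x2, uniq (x1 :: q) &
     (if l is Some k then (size q <= 2 * k)%N else true)].
Proof.
move=> Esym [_ Vconn] Vrad x1V x2V.
have [q0 [pq0 lq0 sq0]] : exists q0, [/\ path E x1 q0, last x1 q0 = x2 &
     (if l is Some k then (size q0 <= 2 * k)%N else true)].
  case: l Vrad => [k Vrad|_]; first exact: radius_walk Esym Vrad x1V x2V.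
  by have /connectP [p pp lp] := Vconn _ _ x1V x2V; exists p.
subst x2; case/shortenP: pq0 => q pq uq sub; exists q; split => //.
case: l sq0 {Vrad} => // k; apply: leq_trans.
by apply: uniq_leq_size sub; case/andP: uq.
Qed.

Definition induced (T : finType) (L : rel T) (Y0 : {set T}) : rel 'I_#|Y0| :=
  fun u v => L (enum_val u) (enum_val v).
Arguments induced {T} L Y0.

Lemma subdivision_of_routing (T : finType) (e : rel T) (Y Y0 : {set T})
    (L : rel T) (M : option nat) (Q : T -> T -> seq T) (W : T -> T -> {set T}) :
  Y0 \subset Y ->
  (forall x y, L x y -> [/\ in_bracket M (size (Q x y)),
       path e x (rcons (Q x y) y), uniq (Q x y) & {subset Q x y <= W x y}]) ->
  (forall x y, L x y -> [disjoint W x y & Y]) ->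
  (forall x y x' y', L x y -> L x' y' ->
       ~ ((x = x' /\ y = y') \/ (x = y' /\ y = x')) -> [disjoint W x y & W x' y']) ->
  contains_subdivision e Y M (induced L Y0).
Proof.
move=> sY0 HQ HWY HWW.
exists (fun u => enum_val u); split; first exact: enum_val_inj.
split=> [v|]; first exact: (subsetP sY0 _ (enum_valP v)).
exists (fun u v => Q (enum_val u) (enum_val v)); split.
  move=> u v _ euv; have [h1 h2 h3 h4] := HQ _ _ euv; split => // w.
  apply/negP => /h4 wW.
  by have := subsetP sY0 _ (enum_valP w); rewrite (disjointFr (HWY _ _ euv) wW).
move=> u v u' v' uv euv uv' euv' neq x xP.
have other_edge : ~ ((enum_val u = enum_val u' /\ enum_val v = enum_val v') \/
                     (enum_val u = enum_val v' /\ enum_val v = enum_val u')).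
  case=> [[/enum_val_inj E1 /enum_val_inj E2]|[/enum_val_inj E1 /enum_val_inj E2]].
    by move: neq; rewrite E1 E2 eqxx.
  by subst; lia.
have [_ _ _ QW] := HQ _ _ euv; have [_ _ _ QW'] := HQ _ _ euv'.
apply/negP => /QW' xW'.
by rewrite (disjointFr (HWW _ _ _ _ euv euv' other_edge) (QW _ xP)) in xW'.
Qed.

Definition arcs (T : finType) (L : rel T) (Y0 : {set T}) : {set T * T} :=
  [set p | [&& p.1 \in Y0, p.2 \in Y0 & L p.1 p.2]].

Lemma card_arcs_ord n (eL : rel 'I_n) : symmetric eL -> irreflexive eL ->
  #|[set p : 'I_n * 'I_n | eL p.1 p.2]| = (2 * nedges eL)%N.
Proof.
move=> Hs Hi.
set S := [set p : 'I_n * 'I_n | eL p.1 p.2].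
set S1 := [set p : 'I_n * 'I_n | (p.1 < p.2)%N && eL p.1 p.2].
rewrite -(cardsID [set p : 'I_n * 'I_n | (p.1 < p.2)%N] S).
have -> : S :&: [set p : 'I_n * 'I_n | (p.1 < p.2)%N] = S1.
  by apply/setP => p; rewrite !inE andbC.
have -> : S :\: [set p : 'I_n * 'I_n | (p.1 < p.2)%N] = (fun p => (p.2, p.1)) @: S1.
  apply/setP => [[a b]]; rewrite !inE /=; apply/idP/imsetP.
    move=> /andP[nab eab]; exists (b, a) => //; rewrite inE /= Hs eab andbT.
    rewrite ltn_neqAle leqNgt nab andbT; apply/eqP => ba.
    by have := Hi a; rewrite -{2}(val_inj ba) eab.
  case=> [[c d]]; rewrite inE /= => /andP[cd ecd] [-> ->].
  by rewrite -leqNgt ltnW //= Hs.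
rewrite card_imset; first by rewrite /nedges -/S1 mul2n addnn.
by move=> [a b] [c d] [-> ->].
Qed.

Lemma card_arcs (T : finType) (L : rel T) (Y0 : {set T}) :
  symmetric L -> irreflexive L -> (#|arcs L Y0| <= 2 * nedges (induced L Y0))%N.
Proof.
move=> Ls Li; rewrite -card_arcs_ord; last 2 first.
- by move=> u v; rewrite /induced Ls.
- by move=> u; rewrite /induced Li.
set g := fun p : 'I_#|Y0| * 'I_#|Y0| => (enum_val p.1, enum_val p.2).
apply: leq_trans (leq_imset_card g _); apply: subset_leq_card.
apply/subsetP => [[a b]]; rewrite !inE /= => /and3P[aY bY abL].
apply/imsetP; exists (enum_rank_in aY a, enum_rank_in aY b).
  by rewrite inE /= /induced !(enum_rankK_in aY).
by rewrite /g /= !(enum_rankK_in aY).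
Qed.

Lemma bin_le_exp n k : ('C(n, k) <= n ^ k)%N.
Proof.
have ffact_le_exp : (n ^_ k <= n ^ k)%N.
  elim: k n => [|k IH] n //; rewrite ffactnS expnS; apply: leq_mul => //.
  apply: leq_trans (IH _) _; case: k {IH} => // k.
  by rewrite leq_exp2r // leq_pred.
by apply: leq_trans ffact_le_exp; rewrite -bin_ffact leq_pmulr // fact_gt0.
Qed.

Section Degeneracy.
Variables (T : finType) (L : rel T).

Definition deg (Y0 : {set T}) (y : T) : nat := #|[set z in Y0 | L y z]|.

Lemma card_arcs_deg (Y0 : {set T}) : #|arcs L Y0| = (\sum_(y in Y0) deg Y0 y)%N.
Proof.
rewrite -sum1_card (partition_big (fun p : T * T => p.1) (mem Y0)); last first.
  by move=> p; rewrite inE => /andP[].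
apply: eq_bigr => y yY.
rewrite -[RHS](@card_imset _ _ (pair y)); last by move=> a b [].
rewrite -sum1_card; apply: eq_bigl => -[a b]; rewrite !inE /=.
apply/idP/imsetP => [/andP[/and3P[_ bY Lab] /eqP ay]|[z]].
  by subst a; exists b; rewrite // inE bY Lab.
by rewrite inE => /andP[zY Lyz] [-> ->] /=; rewrite zY Lyz eqxx (yY : y \in Y0).
Qed.

Lemma min_deg (Y0 : {set T}) : Y0 != set0 ->
  exists2 y, y \in Y0 & (#|Y0| * deg Y0 y <= #|arcs L Y0|)%N.
Proof.
case/set0Pn => y0 y0Y.
case: (@arg_minnP _ y0 (mem Y0) (deg Y0) y0Y) => y yY ymin.
exists y => //; rewrite card_arcs_deg -sum_nat_const.
by apply: leq_sum => i iY; apply: ymin.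
Qed.

Definition cliques (r : nat) (Y0 : {set T}) : {set {set T}} :=
  [set S : {set T} | [&& S \subset Y0, #|S| == r &
     [forall x in S, forall y in S, (x != y) ==> L x y]]].

(* Deleting y from Y0 loses at most the (r-1)-subsets of the neighbourhood
   of y, i.e. at most deg y ^ (r - 1) cliques of size r. *)
Lemma cliques_delete r1 (Y0 : {set T}) y : y \in Y0 ->
  (#|cliques r1.+1 Y0| <= #|cliques r1.+1 (Y0 :\ y)| + deg Y0 y ^ r1)%N.
Proof.
move=> yY; set Cy := [set S in cliques r1.+1 Y0 | y \in S].
have split_y : cliques r1.+1 Y0 \subset cliques r1.+1 (Y0 :\ y) :|: Cy.
  apply/subsetP => S; rewrite !inE => /and3P[SY Sr Scl].
  case yS: (y \in S); first by rewrite Sr Scl SY orbT.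
  rewrite Sr Scl !andbT andbF orbF; apply/subsetP => z zS.
  by rewrite !inE (subsetP SY _ zS) andbT; apply: contraTneq zS => ->; rewrite yS.
apply: leq_trans (subset_leq_card split_y) _.
apply: leq_trans (leq_card_setU _ _) _; rewrite leq_add2l.
apply: leq_trans (bin_le_exp _ _); rewrite /deg -cards_draws.
have del_inj : {in Cy &, injective (fun S => S :\ y)}.
  move=> S S'; rewrite !inE => /andP[_ yS] /andP[_ yS'] E.
  by rewrite -(setD1K yS) -(setD1K yS') E.
rewrite -(card_in_imset del_inj); apply: subset_leq_card.
apply/subsetP => _ /imsetP [S SC1 ->].
move: SC1; rewrite !inE => /andP[/and3P[SY /eqP Sr /forallP Scl] yS].
apply/andP; split; last by move: Sr; rewrite (cardsD1 y) yS add1n => -[->].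
apply/subsetP => z; rewrite !inE => /andP[zy zS]; rewrite (subsetP SY _ zS) /=.
by move/implyP: (Scl y) => /(_ yS) /forallP /(_ z) /implyP /(_ zS) /implyP;
  apply; rewrite eq_sym.
Qed.

Local Open Scope ring_scope.

Lemma cliques_bound (R : realFieldType) r1 (D : R) (Y : {set T}) : 0 <= D ->
  (forall Y0 : {set T}, Y0 \subset Y -> Y0 != set0 ->
     exists2 y, y \in Y0 & (deg Y0 y)%:R <= D) ->
  (#|cliques r1.+1 Y|)%:R <= (#|Y|)%:R * D ^+ r1.
Proof.
move=> D0 degenerate.
suff bound_sub n (Y0 : {set T}) : #|Y0| = n -> Y0 \subset Y ->
    (#|cliques r1.+1 Y0|)%:R <= n%:R * D ^+ r1 by exact: bound_sub.
elim: n Y0 => [|n IH] Y0 cY sY.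
  move/eqP: cY; rewrite cards_eq0 => /eqP->.
  suff -> : cliques r1.+1 set0 = set0 by rewrite cards0 mul0r.
  apply/setP => S; rewrite !inE subset0.
  by apply/negP => /and3P[/eqP-> /eqP]; rewrite cards0.
have [y yY dy] := degenerate _ sY (ltac:(by rewrite -cards_eq0 cY)).
have cY' : #|Y0 :\ y| = n by move: cY; rewrite (cardsD1 y) yY add1n => -[].
have sY' : Y0 :\ y \subset Y by apply: subset_trans sY; apply: subsetDl.
apply: le_trans (_ : (#|cliques r1.+1 (Y0 :\ y)|)%:R + (deg Y0 y)%:R ^+ r1 <= _).
  by rewrite -natrX -natrD ler_nat; apply: cliques_delete.
rewrite [n.+1%:R]mulrSr mulrDl mul1r; apply: lerD; first exact: IH.
by apply: lerXn2r => //; rewrite nnegrE.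
Qed.

End Degeneracy.

Section PairSystems.
Variables (T : finType) (m : nat) (A : 'I_m -> {set T}).

Definition pair_system := {ffun 'I_m -> option (T * T)}.

Definition fits (g : pair_system) (i : 'I_m) : bool :=
  if g i is Some p then [&& p.1 \in A i, p.2 \in A i & p.1 != p.2] else true.

Definition same_edge (p q : T * T) : bool := (q == p) || (q == (p.2, p.1)).

Definition separated (g : pair_system) (i j : 'I_m) : bool :=
  if (g i, g j) is (Some p, Some q) then ~~ same_edge p q else true.

Definition valid (g : pair_system) : bool :=
  [forall i, fits g i] && [forall i, forall j, (i != j) ==> separated g i j].

Definition used (g : pair_system) : {set 'I_m} := [set i | g i != None].

Definition carried (g : pair_system) : rel T :=
  fun x y => [exists i, (g i == Some (x, y)) || (g i == Some (y, x))].

Definition maximal (g : pair_system) : Prop :=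
  valid g /\ forall g', valid g' -> (#|used g'| <= #|used g|)%N.

(* The empty system is valid, so a maximal one exists. *)
Lemma maximal_exists : exists g, maximal g.
Proof.
have empty_valid : valid [ffun=> None].
  apply/andP; split; apply/forallP => i; first by rewrite /fits ffunE.
  by apply/forallP => j; rewrite /separated !ffunE implybT.
case: (arg_maxnP (fun g => #|used g|) empty_valid) => g gv gmax.
by exists g; split => // g' /gmax.
Qed.

Lemma carried_sym (g : pair_system) : symmetric (carried g).
Proof. by move=> x y; apply: eq_existsb => i; rewrite orbC. Qed.

Lemma carried_irr (g : pair_system) : valid g -> irreflexive (carried g).
Proof.
case/andP => /forallP gfit _ x; apply/existsP => -[i]; rewrite orbb => /eqP gi.
by have := gfit i; rewrite /fits gi eqxx !andbF.
Qed.

Lemma carried_in (g : pair_system) i x y : valid g ->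
  (g i == Some (x, y)) || (g i == Some (y, x)) -> (x \in A i) && (y \in A i).
Proof.
case/andP => /forallP /(_ i); rewrite /fits => gfit _.
by case/orP => /eqP gi; move: gfit; rewrite gi /= => /and3P[-> -> _].
Qed.

(* Each used index carries its own edge, so a valid system uses at most as
   many indices as there are arcs of the carried graph. *)
Lemma card_used (g : pair_system) (Y : {set T}) : valid g ->
  (forall i, A i \subset Y) -> (#|used g| <= #|arcs (carried g) Y|)%N.
Proof.
move=> /[dup] gv /andP[/forallP gfit /forallP gsep] AY.
have g_inj : {in used g &, injective g}.
  move=> i j; rewrite inE => gi _ gij; apply/eqP/negPn/negP => ij.
  move/forallP: (gsep i) => /(_ j); rewrite ij /separated gij /=.
  by rewrite gij in gi; case: (g j) gi => // p _; rewrite /same_edge eqxx.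
rewrite -(card_in_imset g_inj) -[#|arcs _ _|](card_imset _ (@Some_inj _)).
apply: subset_leq_card; apply/subsetP => _ /imsetP [i iu ->].
move: iu; rewrite inE; case gi: (g i) => [[x y]|] // _.
have /andP[xA yA] : (x \in A i) && (y \in A i).
  by apply: (carried_in gv); rewrite gi eqxx.
apply/imsetP; exists (x, y) => //.
rewrite inE /= (subsetP (AY i) _ xA) (subsetP (AY i) _ yA).
by apply/existsP; exists i; rewrite gi eqxx.
Qed.

(* In a maximal system every unused index sees a clique of the carried graph:
   a missing pair of A i could otherwise be assigned to i. *)
Lemma unused_clique (g : pair_system) i x y : maximal g -> i \notin used g ->
  x \in A i -> y \in A i -> x != y -> carried g x y.
Proof.
move=> [gv gmax]; rewrite inE negbK => /eqP gi xA yA xy.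
apply: contraT => nxy.
have fresh k q : g k = Some q -> ~~ same_edge q (x, y) && ~~ same_edge (x, y) q.
  move=> gk; rewrite -negb_or; apply: contra nxy => xy_at_k.
  apply/existsP; exists k; rewrite gk; case: q {gk} xy_at_k => a b.
  by rewrite /same_edge /=; case/orP=> /orP[] /eqP [-> ->]; rewrite eqxx ?orbT.
pose g' : pair_system := [ffun j => if j == i then Some (x, y) else g j].
have g'v : valid g'.
  case/andP: gv => /forallP gfit /forallP gsep; apply/andP; split.
    apply/forallP => j; rewrite /fits ffunE.
    by case: eqP => [->|_]; [rewrite xA yA xy | exact: gfit].
  apply/'forall_forallP => j k; apply/implyP => jk; rewrite /separated !ffunE.
  case: (eqVneq j i) => [je|ji]; case: (eqVneq k i) => [ke|ki].
  - by move: jk; rewrite je ke eqxx.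
  - by case gk: (g k) => [q|] //; case/andP: (fresh _ _ gk).
  - by case gj: (g j) => [p|] //; case/andP: (fresh _ _ gj).
  - by move/forallP: (gsep j) => /(_ k); rewrite jk.
have used_g' : used g' = i |: used g.
  by apply/setP => j; rewrite !inE ffunE; case: (j == i).
have := gmax _ g'v; rewrite used_g' cardsU1 inE gi eqxx /=.
by rewrite ltnn.
Qed.

End PairSystems.

Lemma subset_of_card (T : finType) (S : {set T}) k : k <= #|S| ->
  exists B : {set T}, (B \subset S) && (#|B| == k).
Proof.
move=> kS; have : 0 < #|[set B : {set T} | B \subset S & #|B| == k]|.
  by rewrite cards_draws bin_gt0.
by case/card_gt0P => B; rewrite inE => ?; exists B.
Qed.

Lemma choose_subsets (I T : finType) (N : I -> {set T}) k :
  (forall i, k <= #|N i|) ->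
  exists A : I -> {set T}, forall i, A i \subset N i /\ #|A i| = k.
Proof.
move=> Nk; exists (fun i => xchoose (subset_of_card (Nk i))) => i.
by have /andP[? /eqP] := xchooseP (subset_of_card (Nk i)).
Qed.

Local Open Scope ring_scope.

Lemma powR_nat1D (R : realType) (n : nat) (a : R) :
  (0 < n)%N -> powR n%:R (1 + a) = n%:R * powR n%:R a.
Proof. by move=> n0; rewrite powRD ?powRr1 // pnatr_eq0 -lt0n n0 implybT. Qed.

Lemma powR_degeneracy (R : realType) (n : nat) (c a : R) (k : nat) : 0 <= a ->
  n%:R * (c * powR n%:R a) ^+ k = c ^+ k * powR n%:R (1 + a * k%:R).
Proof.
case: n => [|n] a0.
  have ak : 0 <= a * k%:R by rewrite mulr_ge0.
  by rewrite mulr0n mul0r powR0 ?mulr0 // gt_eqF //; lra.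
rewrite powR_nat1D // powRrM powR_mulrn ?powR_ge0 // exprMn.
by rewrite mulrCA.
Qed.

Lemma powR_nat_mono (R : realType) (n : nat) (a b : R) :
  0 < a -> a <= b -> powR n%:R a <= powR n%:R b.
Proof.
case: n => [|n] a0 ab; last by apply: ler_powR; rewrite // ler1n.
by rewrite !powR0 // gt_eqF // (lt_le_trans a0 ab).
Qed.

Definition alpha (R : realType) (r t : nat) (k' : R) : R :=
  2 * k' + t.-1%:R * (2 * k') ^+ r.-1.

Lemma alpha_gt0 (R : realType) (r t : nat) (k' : R) : 0 < k' -> 0 < alpha r t k'.
Proof.
move=> k'0; rewrite /alpha ltr_pwDl ?mulr_ge0 ?exprn_ge0 //; lra.
Qed.

Local Close Scope ring_scope.

Section Components.
Variables (T : finType) (e : rel T) (Y : {set T}) (m : nat).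
Variables (CV : 'I_m -> {set T}) (CE : 'I_m -> rel T) (l : option nat).
Hypothesis e_sym : symmetric e.
Hypothesis C_sub : forall i, is_subgraph e (CV i) (CE i).
Hypothesis C_Y : forall i, [disjoint CV i & Y].
Hypothesis C_disj : forall i j, i != j -> [disjoint CV i & CV j].
Hypothesis C_conn : forall i, sg_connected (CV i) (CE i).
Hypothesis C_rad : forall i, radius_le (CV i) (CE i) l.

Definition attach (i : 'I_m) : {set T} := [set y in Y | [exists x in CV i, e y x]].

Definition routes (i : 'I_m) (x y : T) (P : seq T) : bool :=
  [&& in_bracket (two_l_plus_one l) (size P), path e x (rcons P y), uniq P &
      all (mem (CV i)) P].

(* Two attachment vertices of a component are joined through it: go to a
   neighbour in the component, follow a shortest path inside, and leave. *)
Lemma routes_exist i x y :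
  exists P, (x \in attach i) && (y \in attach i) ==> routes i x y P.
Proof.
case: (boolP ((x \in attach i) && (y \in attach i))); last by exists [::].
rewrite !inE => /andP[/andP[_ /existsP[x1 /andP[x1C ex1]]]].
move=> /andP[_ /existsP[x2 /andP[x2C ey2]]].
have [CE_e CE_sym] := C_sub i.
have [q [pq lq uq sq]] := short_path CE_sym (C_conn i) (C_rad i) x1C x2C.
exists (x1 :: q); apply/and4P; split => //.
- by rewrite /in_bracket /=; case: l sq => [k|] //= sq; lia.
- rewrite /= ex1 rcons_path lq (e_sym x2 y) ey2 andbT.
  by apply: sub_path pq => a c /CE_e [].
- rewrite /= x1C; apply/allP => z zq.
  by apply: (path_in _ pq zq) => a c /CE_e [].
Qed.

Definition route (i : 'I_m) (x y : T) : seq T := xchoose (routes_exist i x y).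

Lemma routeP i x y : x \in attach i -> y \in attach i -> routes i x y (route i x y).
Proof.
by move=> xa ya; have /implyP := xchooseP (routes_exist i x y); apply; rewrite xa ya.
Qed.

Lemma attach_sub i : attach i \subset Y.
Proof. by apply/subsetP => y; rewrite inE => /andP[]. Qed.

Local Open Scope ring_scope.
Variable R : realType.

Definition dense_subdivision (k' eps : R) : Prop :=
  exists (n : nat) (eL : rel 'I_n),
    [/\ symmetric eL, irreflexive eL,
        k' * powR (n%:R) (1 + eps) < (nedges eL)%:R &
        contains_subdivision e Y (two_l_plus_one l) eL].

Definition biclique (r t : nat) : Prop :=
  exists (S : {set T}) (J : {set 'I_m}),
    [/\ S \subset Y, #|S| = r, #|J| = t &
        forall y j, y \in S -> j \in J -> [exists x in CV j, e y x]].

Section Assignment.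
Variable A : 'I_m -> {set T}.
Hypothesis A_attach : forall i, A i \subset attach i.

Definition carrier (g : pair_system T m) (x y : T) : option 'I_m :=
  [pick i | (g i == Some (x, y)) || (g i == Some (y, x))].

(* Routing each carried pair through its carrier realises every induced
   subgraph of the carried graph on Y as a [2l+1]-subdivision in G. *)
Lemma carried_subdivision (g : pair_system T m) (Y0 : {set T}) :
  valid A g -> Y0 \subset Y ->
  contains_subdivision e Y (two_l_plus_one l) (induced (carried g) Y0).
Proof.
move=> gv sY0.
pose W x y := if carrier g x y is Some i then CV i else set0.
pose Q x y := if carrier g x y is Some i then route i x y else [::].
have carrierP x y : carried g x y ->
    exists2 i, carrier g x y = Some i & (g i == Some (x, y)) || (g i == Some (y, x)).
  rewrite /carrier; case: pickP => [i gi _|none /existsP[i]]; first by exists i.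
  by rewrite none.
apply: (subdivision_of_routing (W := W) (Q := Q) sY0).
- move=> x y /carrierP [i ci gi]; rewrite /Q /W ci.
  have /andP[xA yA] := carried_in gv gi.
  have /and4P[? ? ? /allP ?] := routeP
    (subsetP (A_attach i) _ xA) (subsetP (A_attach i) _ yA).
  by split.
- by move=> x y /carrierP [i ci _]; rewrite /W ci.
move=> x y x' y' /carrierP [i ci gi] /carrierP [i' ci' gi'] other.
rewrite /W ci ci'.
apply: C_disj; apply: contra_notN other => /eqP ii; subst i'.
by case/orP: gi => /eqP gi; case/orP: gi' => /eqP; rewrite gi => -[-> ->]; tauto.
Qed.

Lemma carried_sparse (g : pair_system T m) (Y0 : {set T}) (k' eps : R) :
  ~ dense_subdivision k' eps -> valid A g -> Y0 \subset Y ->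
  (#|arcs (carried g) Y0|)%:R <= 2 * k' * powR (#|Y0|%:R) (1 + eps).
Proof.
move=> not_dense gv sY0.
have Lsym := carried_sym g; have Lirr := carried_irr gv.
have edges_le : (nedges (induced (carried g) Y0))%:R <= k' * powR (#|Y0|%:R) (1 + eps).
  rewrite leNgt; apply/negP => dense; apply: not_dense.
  exists #|Y0|, (induced (carried g) Y0); split => //.
  - by move=> u v; rewrite /induced Lsym.
  - by move=> u; rewrite /induced Lirr.
  - exact: carried_subdivision.
apply: le_trans (_ : ((2 * nedges (induced (carried g) Y0))%N)%:R <= _).
  by rewrite ler_nat card_arcs.
by rewrite natrM -mulrA ler_wpM2l.
Qed.

Lemma carried_degenerate (g : pair_system T m) (k' eps : R) :
  ~ dense_subdivision k' eps -> valid A g -> 0 < k' -> 0 <= eps ->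
  forall Y0 : {set T}, Y0 \subset Y -> Y0 != set0 ->
  exists2 y, y \in Y0 & (deg (carried g) Y0 y)%:R <= 2 * k' * powR #|Y|%:R eps.
Proof.
move=> not_dense gv k'0 eps0 Y0 sY0 Y0n.
have [y yY ydeg] := min_deg (carried g) Y0n; exists y => //.
have Y0_gt0 : (0 < #|Y0|)%N by rewrite card_gt0.
have avg : #|Y0|%:R * (deg (carried g) Y0 y)%:R <=
           #|Y0|%:R * (2 * k' * powR #|Y0|%:R eps).
  rewrite -natrM mulrCA -powR_nat1D //.
  by apply: le_trans (carried_sparse not_dense gv sY0); rewrite ler_nat.
rewrite ler_pM2l ?ltr0n // in avg; apply: le_trans avg _.
rewrite ler_wpM2l ?mulr_ge0 //; first lra.
by apply: ge0_ler_powR; rewrite ?nnegrE ?ler_nat ?subset_leq_card.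
Qed.

(* Without outcome (1) few components are used: none if r = 1 (a single
   vertex carries no pair), and otherwise at most the number of carried arcs. *)
Lemma used_bound (g : pair_system T m) r1 (k' eps : R) :
  ~ dense_subdivision k' eps -> valid A g -> (forall i, #|A i| = r1.+1) ->
  0 < k' -> 0 <= eps ->
  #|used g|%:R <= 2 * k' * powR #|Y|%:R (1 + eps * r1%:R).
Proof.
move=> not_dense gv A_card k'0 eps0.
have bound_ge0 : 0 <= 2 * k' * powR #|Y|%:R (1 + eps * r1%:R).
  by rewrite mulr_ge0 ?powR_ge0 //; lra.
case: r1 A_card bound_ge0 => [|r1] A_card bound_ge0.
  suff -> : used g = set0 by rewrite cards0.
  apply/setP => i; rewrite !inE; case/andP: gv => /forallP /(_ i).
  rewrite /fits; case: (g i) => // -[x y] /and3P[xA yA] /= + _.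
  have /eqP/cards1P[z Az] := A_card i.
  by move: xA yA; rewrite /= Az !inE => /eqP-> /eqP->; rewrite eqxx.
have A_Y i : A i \subset Y := subset_trans (A_attach i) (attach_sub i).
apply: le_trans (_ : #|arcs (carried g) Y|%:R <= _).
  by rewrite ler_nat (card_used gv A_Y).
apply: le_trans (carried_sparse not_dense gv (subxx Y)) _.
rewrite ler_wpM2l ?mulr_ge0 //; first lra.
apply: powR_nat_mono; first lra.
by rewrite lerD2l ler_peMr // ler1n.
Qed.

(* Each unused component sees the r-clique A i of the carried graph; without
   outcome (2) no r-clique is seen by t of them. *)
Lemma unused_bound (g : pair_system T m) r t : maximal A g -> ~ biclique r t ->
  (0 < t)%N -> (forall i, #|A i| = r) ->
  (#|~: used g| <= #|cliques (carried g) r Y| * t.-1)%N.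
Proof.
move=> gmax no_biclique t0 A_card.
have A_clique i : i \in ~: used g -> A i \in cliques (carried g) r Y.
  rewrite inE => iu; rewrite inE (subset_trans (A_attach i) (attach_sub i)).
  rewrite A_card eqxx /=.
  apply/'forall_implyP => x xA; apply/'forall_implyP => y yA; apply/implyP => xy.
  exact: unused_clique gmax iu xA yA xy.
rewrite -sum1_card (partition_big A (mem (cliques (carried g) r Y))) //=.
rewrite -sum_nat_const; apply: leq_sum => S SC.
rewrite sum1dep_card leqNgt; apply/negP; rewrite prednK // => /subset_of_card.
case=> J /andP[JF /eqP Jt]; apply: no_biclique; exists S, J.
move: SC; rewrite inE => /and3P[SY /eqP Sr _]; split => // y j yS jJ.
have := subsetP JF _ jJ; rewrite inE => /andP[_ /eqP AjS].
by have := subsetP (A_attach j) y; rewrite AjS inE => /(_ yS) /andP[].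
Qed.

End Assignment.

Lemma few_components r t (k' eps : R) :
  (0 < r)%N -> (0 < t)%N -> 0 < k' -> 0 <= eps ->
  (forall i, adherent e (CV i) r Y) ->
  ~ dense_subdivision k' eps -> ~ biclique r t ->
  m%:R <= alpha r t k' * powR #|Y|%:R (1 + eps * (r%:R - 1)).
Proof.
case: r => // r1 _ t0 k'0 eps0 adh not_dense no_biclique.
have [A A_spec] := @choose_subsets _ _ attach r1.+1 (fun i => (adh i).2).
have A_attach i : A i \subset attach i := (A_spec i).1.
have A_card i : #|A i| = r1.+1 := (A_spec i).2.
have [g [gv gmax]] := maximal_exists A.
set D := 2 * k' * powR #|Y|%:R eps.
have D_ge0 : 0 <= D by rewrite /D mulr_ge0 ?powR_ge0 //; lra.
have cliques_le :=
  cliques_bound r1 D_ge0 (carried_degenerate A_attach not_dense gv k'0 eps0).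
have unused_le := unused_bound A_attach (conj gv gmax) no_biclique t0 A_card.
have used_le := used_bound A_attach not_dense gv A_card k'0 eps0.
have -> : m = (#|used g| + #|~: used g|)%N by rewrite cardsC card_ord.
have -> : r1.+1%:R - 1 = r1%:R :> R by rewrite mulrSr addrK.
rewrite natrD /alpha mulrDl; apply: lerD => //=.
apply: le_trans (_ : (#|cliques (carried g) r1.+1 Y| * t.-1)%N%:R <= _).
  by rewrite ler_nat.
by rewrite natrM mulrC -mulrA -powR_degeneracy // ler_wpM2l.
Qed.

End Components.

Lemma or3_intro (P1 P2 P3 : Prop) : (~ P1 -> ~ P2 -> P3) -> P1 \/ P2 \/ P3.
Proof.
move=> P3_else; case: (classic P1) => [|not_P1]; first by left.
by right; case: (classic P2) => [|not_P2]; [left | right; exact: P3_else].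
Qed.

Local Open Scope ring_scope.

Unset Implicit Arguments.

Theorem mainTheorem8 (R : realType) (r t : nat) (k' : R) :
  (0 < r)%N -> (0 < t)%N -> 0 < k' ->
  exists2 alpha : R, 0 < alpha &
  forall (l : option nat) (b : nat) (eps : R) (T : finType) (e : rel T)
         (Y : {set T}) (m : nat) (CV : 'I_m -> {set T}) (CE : 'I_m -> rel T),
    (0 < b)%N -> 0 <= eps ->
    symmetric e -> irreflexive e ->
    (forall i, is_subgraph e (CV i) (CE i)) ->
    (forall i, [disjoint CV i & Y]) ->
    (forall i j, i != j -> [disjoint CV i & CV j]) ->
    (forall i, sg_connected (CV i) (CE i)) ->
    (forall i, (#|CV i| <= b)%N) ->
    (forall i, adherent e (CV i) r Y) ->
    (forall i, radius_le (CV i) (CE i) l) ->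
    (exists (n : nat) (eL : rel 'I_n),
        [/\ symmetric eL, irreflexive eL,
            k' * powR (n%:R) (1 + eps) < (nedges eL)%:R &
            contains_subdivision e Y (two_l_plus_one l) eL])
    \/ (exists (S : {set T}) (J : {set 'I_m}),
        [/\ S \subset Y, #|S| = r, #|J| = t &
            forall y j, y \in S -> j \in J -> [exists x in CV j, e y x]])
    \/ m%:R <= alpha * powR (#|Y|%:R) (1 + eps * (r%:R - 1)).
Proof.
move=> r_gt0 t_gt0 k'_gt0; exists (alpha r t k'); first exact: alpha_gt0.
move=> l b eps T e Y m CV CE _ eps_ge0 e_sym _ C_sub C_Y C_disj C_conn _ C_adh C_rad.
apply: or3_intro => not_dense no_biclique.
exact: (few_components e_sym C_sub C_Y C_disj C_conn C_rad
          r_gt0 t_gt0 k'_gt0 eps_ge0 C_adh not_dense no_biclique).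
Qed.
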